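(* Let $0<\gamma<\frac n2$, $1\leq k<\frac n2-\gamma$, and let $\Sigma^{k+1}=\mathbb{H}^{k+1}/\pi$ be a closed hyperbolic manifold with Laplace eigenvalues $0=\lambda_0<\lambda_1\leq\lambda_2\leq\dots$ (repeated with multiplicity). For $m,\ell\in\mathbb{N}\cup\{0\}$ let $\mu_m=m(m+n-k-2)$, $a_m=\sqrt{\mu_m+(\frac{n-k-2}{2})^2}$, $b_\ell=\sqrt{\lambda_\ell-(\frac k2)^2}$ (with $b_\ell=i\sqrt{(\frac k2)^2-\lambda_\ell}$ if $\lambda_\ell<(\frac k2)^2$), and $$\Theta_{m,\ell}=4^\gamma\frac{\Gamma\big(\frac{1+\gamma}{2}+\frac{a_m+b_\ell i}{2}\big)}{\Gamma\big(\frac{1-\gamma}{2}+\frac{a_m+b_\ell i}{2}\big)}\,\frac{\Gamma\big(\frac{1+\gamma}{2}+\frac{a_m-b_\ell i}{2}\big)}{\Gamma\big(\frac{1-\gamma}{2}+\frac{a_m-b_\ell i}{2}\big)}.$$ Then $\Theta_{m+1,0}>\Theta_{m,0}$ and $\Theta_{m,\ell+1}\geq\Theta_{m,\ell}$ for all $m,\ell\in\mathbb{N}\cup\{0\}$.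
   Context: The numbers $\Theta_{m,\ell}$ are the (positive real) eigenvalues of the conformal fractional Laplacian of the product metric on $\mathbb{S}^{n-k-1}\times\Sigma^{k+1}$. *)

From Stdlib Require Import Reals Factorial.
From Coquelicot Require Import Coquelicot.
Open Scope R_scope.

(* complex power N^z = exp(z ln N) for a positive integer N *)
Definition Cnatpow (N : nat) (z : C) : C :=
  let t := ln (INR N) in
  (exp (Re z * t) * cos (Im z * t), exp (Re z * t) * sin (Im z * t)).

Fixpoint Cprod_shift (z : C) (N : nat) : C :=
  match N with
  | O => z
  | S N' => Cmult (Cprod_shift z N') (Cplus z (RtoC (INR N)))
  end.

Definition gauss_seq (z : C) (N : nat) : C :=
  Cdiv (Cmult (RtoC (INR (fact N))) (Cnatpow N z)) (Cprod_shift z N).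

(* The complex Gamma function, defined as the limit of the Gauss product
   (componentwise limit of real and imaginary parts); this limit exists
   for every z not in {0,-1,-2,...}. *)
Definition CGamma (z : C) : C :=
  (real (Lim_seq (fun N => Re (gauss_seq z N))),
   real (Lim_seq (fun N => Im (gauss_seq z N)))).

Definition mu_ (n k m : nat) : R := INR m * (INR m + INR n - INR k - 2).

Definition a_ (n k m : nat) : R :=
  sqrt (mu_ n k m + ((INR n - INR k - 2) / 2) ^ 2).

Definition b_ (k : nat) (lam : R) : C :=
  if Rle_dec ((INR k / 2) ^ 2) lam
  then RtoC (sqrt (lam - (INR k / 2) ^ 2))
  else Cmult Ci (RtoC (sqrt ((INR k / 2) ^ 2 - lam))).

Definition Theta (n k : nat) (gamma : R) (lambda : nat -> R) (m l : nat) : C :=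
  let a := RtoC (a_ n k m) in
  let bi := Cmult (b_ k (lambda l)) Ci in
  let zp := Cdiv (Cplus a bi) (RtoC 2) in
  let zm := Cdiv (Cminus a bi) (RtoC 2) in
  Cmult (RtoC (Rpower 4 gamma))
    (Cmult
      (Cdiv (CGamma (Cplus (RtoC ((1 + gamma) / 2)) zp))
            (CGamma (Cplus (RtoC ((1 - gamma) / 2)) zp)))
      (Cdiv (CGamma (Cplus (RtoC ((1 + gamma) / 2)) zm))
            (CGamma (Cplus (RtoC ((1 - gamma) / 2)) zm)))).

From Stdlib Require Import Reals Lra Lia Psatz Factorial.
From Coquelicot Require Import Coquelicot.
Open Scope R_scope.

(* With X = (1 - gamma)/2 + a_m/2 and w = i b_l/2, Theta_{m,l} is
   4^gamma Gamma(X+gamma+w) Gamma(X+gamma-w) / (Gamma(X+w) Gamma(X-w)).  Whether b_l is real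
   or imaginary, Gamma(X+w) Gamma(X-w) is the limit of the positive Gauss products
   N!^2 N^(2X) / prod_{j<=N} ((X+j)^2 + T) with T = -w^2 = (lambda_l - k^2/4)/4; the complex
   Gauss product converges because consecutive terms differ relatively by O(1/N^2).
   So Theta_{m,l} is the limit of 4^gamma N^(2 gamma) prod_j ((X+j)^2+T) / ((X+gamma+j)^2+T).
   Every factor is nondecreasing in T, which gives monotonicity in l.  Passing from m to m+1
   raises X by 1/2; for T <= 0 (as for l = 0) this increases every factor, the j = 0 factor
   by a fixed ratio > 1, which gives the strict monotonicity in m. *)

Lemma exp_le_exp x y : x <= y -> exp x <= exp y.
Proof. intros [Hlt | ->]; [left; apply exp_increasing, Hlt | right; reflexivity]. Qed.

Lemma ln_succ_bounds x : 1 <= x -> 1 / (x + 1) <= ln (x + 1) - ln x <= 1 / x.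
Proof.
  intros Hx.
  assert (ln_le : forall t, 0 < t -> ln t <= t - 1).
  { intros t Ht. pose proof (exp_ineq1_le (ln t)) as H. rewrite exp_ln in H; lra. }
  split.
  - pose proof (ln_le (x / (x + 1)) ltac:(apply Rdiv_lt_0_compat; lra)) as H.
    rewrite ln_div in H by lra.
    replace (x / (x + 1) - 1) with (- (1 / (x + 1))) in H by (field; lra). lra.
  - pose proof (ln_le ((x + 1) / x) ltac:(apply Rdiv_lt_0_compat; lra)) as H.
    rewrite ln_div in H by lra.
    replace ((x + 1) / x - 1) with (1 / x) in H by (field; lra). lra.
Qed.

Lemma ex_finite_lim_seq_dominated_increments (u w : nat -> R) (l : R) :
  is_lim_seq w l -> (forall N, Rabs (u (S N) - u N) <= w N - w (S N)) ->
  ex_finite_lim_seq u.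
Proof.
  intros Hw Hinc.
  assert (Hinc' : forall N, - (w N - w (S N)) <= u (S N) - u N <= w N - w (S N))
    by (intros N; apply Rabs_le_between, Hinc).
  assert (w_ge : forall N, l <= w N).
  { apply (is_lim_seq_decr_compare w l Hw). intros N. specialize (Hinc' N). lra. }
  assert (u_ge : forall N, u 0%nat - w 0%nat + w N <= u N).
  { induction N as [|N IH]; [lra|]. specialize (Hinc' N). lra. }
  destruct (ex_finite_lim_seq_decr (fun N => u N + w N) (u 0%nat - w 0%nat + 2 * l))
    as [v Hv].
  - intros N. specialize (Hinc' N). lra.
  - intros N. specialize (u_ge N). specialize (w_ge N). lra.
  - exists (v - l). apply is_lim_seq_ext with (fun N => (u N + w N) - w N).
    + intros N. ring.
    + apply is_lim_seq_minus'; assumption.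
Qed.

Lemma bounded_variation_quadratic (h dh : R -> R) (c s : R) :
  0 <= c -> h 0 = 0 ->
  (forall t, Rabs t <= Rabs s -> is_derive h t (dh t) /\ Rabs (dh t) <= c * Rabs t) ->
  Rabs (h s) <= c * s ^ 2.
Proof.
  intros Hc H0 Hd.
  assert (Hbv : Rabs (h s - h 0) <= c * Rabs s * Rabs (s - 0)).
  { apply (bounded_variation h dh). intros t Ht. rewrite !Rminus_0_r in Ht.
    destruct (Hd t Ht) as [Hder Hle]. split; [exact Hder|].
    eapply Rle_trans; [exact Hle|]. apply Rmult_le_compat_l; assumption. }
  rewrite H0, !Rminus_0_r in Hbv. rewrite <- pow2_abs. lra.
Qed.

Lemma Cmod_le_Rabs_Re_Im (w : C) : Cmod w <= Rabs (Re w) + Rabs (Im w).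
Proof.
  destruct w as [x y]. unfold Cmod; simpl.
  pose proof (Rabs_pos x). pose proof (Rabs_pos y).
  rewrite <- (sqrt_pow2 (Rabs x + Rabs y)) by lra.
  apply sqrt_le_1_alt. pose proof (pow2_abs x). pose proof (pow2_abs y). simpl in *. nra.
Qed.

Definition cexp_ray (z : C) (s : R) : C :=
  (exp (Re z * s) * cos (Im z * s), exp (Re z * s) * sin (Im z * s)).

Lemma Cnatpow_cexp_ray N z : Cnatpow N z = cexp_ray z (ln (INR N)).
Proof. reflexivity. Qed.

Lemma cexp_ray_add z a b : cexp_ray z (a + b) = (cexp_ray z a * cexp_ray z b)%C.
Proof.
  unfold cexp_ray, Cmult; simpl.
  rewrite !Rmult_plus_distr_l, exp_plus, cos_plus, sin_plus. f_equal; ring.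
Qed.

Lemma Cmod_cexp_ray z s : Cmod (cexp_ray z s) = exp (Re z * s).
Proof.
  unfold cexp_ray, Cmod; simpl. set (e := exp (Re z * s)). set (a := Im z * s).
  replace (e * cos a * (e * cos a * 1) + e * sin a * (e * sin a * 1)) with (e ^ 2)
    by (pose proof (sin2_cos2 a); unfold Rsqr in *; nra).
  apply sqrt_pow2. left; apply exp_pos.
Qed.

Lemma cexp_ray_conj z s : cexp_ray (Cconj z) s = Cconj (cexp_ray z s).
Proof.
  destruct z as [p q]. unfold cexp_ray, Cconj; simpl.
  rewrite Ropp_mult_distr_l_reverse, cos_neg, sin_neg. f_equal; ring.
Qed.

Lemma cexp_ray_real r s : cexp_ray (RtoC r) s = RtoC (exp (r * s)).
Proof.
  unfold cexp_ray, RtoC; simpl. rewrite Rmult_0_l, cos_0, sin_0. f_equal; ring.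
Qed.

Section CexpRayTaylor.

Variable z : C.
Let p := Re z.
Let q := Im z.
Let A := Rabs p + Rabs q.
Let E := exp (Rabs p).

Let trig_combination_le c d t : Rabs c <= 1 -> Rabs d <= 1 -> Rabs t <= 1 ->
  Rabs (p * (exp (p * t) * c) + q * (exp (p * t) * d)) <= A * E * 1.
Proof.
  intros Hc Hd Ht.
  assert (He : exp (p * t) <= E).
  { apply exp_le_exp. eapply Rle_trans; [apply Rle_abs|].
    rewrite Rabs_mult. pose proof (Rabs_pos p). pose proof (Rabs_pos t). nra. }
  assert (Hterm : forall r x, Rabs x <= 1 -> Rabs (r * (exp (p * t) * x)) <= Rabs r * E).
  { intros r x Hx. rewrite !Rabs_mult, (Rabs_pos_eq (exp (p * t))) by (left; apply exp_pos).
    apply Rmult_le_compat_l; [apply Rabs_pos|].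
    rewrite <- (Rmult_1_r E). apply Rmult_le_compat; auto using Rabs_pos.
    left; apply exp_pos. }
  eapply Rle_trans; [apply Rabs_triang|].
  pose proof (Hterm p c Hc). pose proof (Hterm q d Hd). unfold A. lra.
Qed.

Lemma cexp_ray_first_order s : Rabs s <= 1 ->
  Rabs (Re (cexp_ray z s) - 1) <= A * E * Rabs s /\
  Rabs (Im (cexp_ray z s)) <= A * E * Rabs s.
Proof.
  intros Hs. simpl. fold p q. split.
  - assert (H : Rabs (exp (p * s) * cos (q * s) - exp (p * 0) * cos (q * 0))
                <= A * E * 1 * Rabs (s - 0)).
    { apply (bounded_variation (fun t => exp (p * t) * cos (q * t))
        (fun t => p * (exp (p * t) * cos (q * t)) + q * (exp (p * t) * - sin (q * t)))).
      intros t Ht. rewrite !Rminus_0_r in Ht. split.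
      - auto_derive; [exact I|]. ring.
      - apply trig_combination_le; try lra; apply Rabs_le.
        + apply COS_bound.
        + pose proof (SIN_bound (q * t)). lra. }
    rewrite !Rmult_0_r, exp_0, cos_0, Rmult_1_l, Rminus_0_r, Rmult_1_r in H. exact H.
  - assert (H : Rabs (exp (p * s) * sin (q * s) - exp (p * 0) * sin (q * 0))
                <= A * E * 1 * Rabs (s - 0)).
    { apply (bounded_variation (fun t => exp (p * t) * sin (q * t))
        (fun t => p * (exp (p * t) * sin (q * t)) + q * (exp (p * t) * cos (q * t)))).
      intros t Ht. rewrite !Rminus_0_r in Ht. split.
      - auto_derive; [exact I|]. ring.
      - apply trig_combination_le; try lra; apply Rabs_le; [apply SIN_bound | apply COS_bound]. }
    rewrite !Rmult_0_r, sin_0, Rmult_0_r, !Rminus_0_r, Rmult_1_r in H. exact H.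
Qed.

Let linear_combination_le x y b : Rabs x <= b -> Rabs y <= b ->
  Rabs (p * x + q * y) <= A * b.
Proof.
  intros Hx Hy. eapply Rle_trans; [apply Rabs_triang|]. rewrite !Rabs_mult.
  pose proof (Rmult_le_compat_l _ _ _ (Rabs_pos p) Hx).
  pose proof (Rmult_le_compat_l _ _ _ (Rabs_pos q) Hy). unfold A. lra.
Qed.

Lemma cexp_ray_second_order s : Rabs s <= 1 ->
  Cmod (cexp_ray z s - 1 - z * RtoC s)%C <= 2 * (A ^ 2 * E) * s ^ 2.
Proof.
  intros Hs.
  assert (Hc : 0 <= A ^ 2 * E)
    by (apply Rmult_le_pos; [apply pow2_ge_0 | left; apply exp_pos]).
  assert (Hfirst : forall t, Rabs t <= Rabs s ->
    Rabs (exp (p * t) * cos (q * t) - 1) <= A * E * Rabs t /\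
    Rabs (exp (p * t) * sin (q * t)) <= A * E * Rabs t)
    by (intros t Ht; apply (cexp_ray_first_order t); lra).
  assert (Hre : Rabs (exp (p * s) * cos (q * s) - 1 - p * s) <= A ^ 2 * E * s ^ 2).
  { apply (bounded_variation_quadratic (fun t => exp (p * t) * cos (q * t) - 1 - p * t)
      (fun t => p * (exp (p * t) * cos (q * t) - 1) + q * - (exp (p * t) * sin (q * t)))); auto.
    - rewrite !Rmult_0_r, exp_0, cos_0. ring.
    - intros t Ht. destruct (Hfirst t Ht) as [H1 H2]. split.
      + auto_derive; [exact I|]. ring.
      + replace (A ^ 2 * E * Rabs t) with (A * (A * E * Rabs t)) by ring.
        apply linear_combination_le; rewrite ?Rabs_Ropp; assumption. }
  assert (Him : Rabs (exp (p * s) * sin (q * s) - q * s) <= A ^ 2 * E * s ^ 2).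
  { apply (bounded_variation_quadratic (fun t => exp (p * t) * sin (q * t) - q * t)
      (fun t => p * (exp (p * t) * sin (q * t)) + q * (exp (p * t) * cos (q * t) - 1))); auto.
    - rewrite !Rmult_0_r, sin_0. ring.
    - intros t Ht. destruct (Hfirst t Ht) as [H1 H2]. split.
      + auto_derive; [exact I|]. ring.
      + replace (A ^ 2 * E * Rabs t) with (A * (A * E * Rabs t)) by ring.
        apply linear_combination_le; assumption. }
  eapply Rle_trans; [apply Cmod_le_Rabs_Re_Im|].
  replace (Re (cexp_ray z s - 1 - z * RtoC s)%C) with (exp (p * s) * cos (q * s) - 1 - p * s)
    by (unfold cexp_ray, p, q, Re, Im; simpl; ring).
  replace (Im (cexp_ray z s - 1 - z * RtoC s)%C) with (exp (p * s) * sin (q * s) - q * s)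
    by (unfold cexp_ray, p, q, Re, Im; simpl; ring).
  lra.
Qed.

End CexpRayTaylor.

(** * Convergence of the complex Gauss product *)

Definition gauss_increment_const (z : C) : R :=
  4 * ((Rabs (Re z) + Rabs (Im z)) ^ 2 * exp (Rabs (Re z))) + Cmod z.

Lemma gauss_increment_const_ge0 z : 0 <= gauss_increment_const z.
Proof.
  unfold gauss_increment_const. pose proof (Cmod_ge_0 z).
  assert (0 <= (Rabs (Re z) + Rabs (Im z)) ^ 2 * exp (Rabs (Re z)))
    by (apply Rmult_le_pos; [apply pow2_ge_0 | left; apply exp_pos]).
  lra.
Qed.

Lemma succ_mul_ln_succ_sub1_le x : 1 <= x -> Rabs ((x + 1) * (ln (x + 1) - ln x) - 1) <= 1 / x.
Proof.
  intros Hx. destruct (ln_succ_bounds x Hx) as [Hlo Hhi].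
  apply Rabs_le_between.
  apply (Rmult_le_compat_l (x + 1)) in Hlo; [|lra].
  apply (Rmult_le_compat_l (x + 1)) in Hhi; [|lra].
  replace ((x + 1) * (1 / (x + 1))) with 1 in Hlo by (field; lra).
  replace ((x + 1) * (1 / x)) with (1 + 1 / x) in Hhi by (field; lra).
  assert (0 < 1 / x) by (apply Rdiv_lt_0_compat; lra). lra.
Qed.

Lemma gauss_increment_factor_le z N : (1 <= N)%nat ->
  let L := ln (INR (S N)) - ln (INR N) in
  Cmod (RtoC (INR (S N)) * (cexp_ray z L - 1 - z * RtoC L) + z * (RtoC (INR (S N) * L) - 1))%C
  <= gauss_increment_const z / INR N.
Proof.
  intros HN L.
  assert (Hn : 1 <= INR N) by (apply (le_INR 1); exact HN).
  assert (HS : INR (S N) = INR N + 1) by apply S_INR.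
  assert (HL : 1 / (INR N + 1) <= L <= 1 / INR N)
    by (unfold L; rewrite HS; apply ln_succ_bounds, Hn).
  assert (Hinv : 1 / INR N <= 1)
    by (unfold Rdiv; rewrite Rmult_1_l, <- Rinv_1; apply Rinv_le_contravar; lra).
  assert (L_pos : 0 < L) by (pose proof (Rdiv_lt_0_compat 1 (INR N + 1)); lra).
  set (c := (Rabs (Re z) + Rabs (Im z)) ^ 2 * exp (Rabs (Re z))).
  assert (Hc : 0 <= c)
    by (apply Rmult_le_pos; [apply pow2_ge_0 | left; apply exp_pos]).
  assert (Htaylor : Cmod (cexp_ray z L - 1 - z * RtoC L)%C <= 2 * c * (1 / INR N) ^ 2).
  { eapply Rle_trans; [apply cexp_ray_second_order; rewrite Rabs_pos_eq; lra|].
    apply Rmult_le_compat_l; [lra|]. apply pow_incr. lra. }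
  assert (Hlin : Rabs (INR (S N) * L - 1) <= 1 / INR N)
    by (unfold L; rewrite HS; apply succ_mul_ln_succ_sub1_le, Hn).
  eapply Rle_trans; [apply Cmod_triangle|].
  rewrite !Cmod_mult, Cmod_R, Rabs_pos_eq by apply pos_INR.
  replace (RtoC (INR (S N) * L) - 1)%C with (RtoC (INR (S N) * L - 1))
    by (unfold RtoC, Cminus, Cplus, Copp; simpl; f_equal; ring).
  rewrite Cmod_R.
  assert (H1 : INR (S N) * Cmod (cexp_ray z L - 1 - z * RtoC L)%C <= 4 * c / INR N).
  { eapply Rle_trans; [apply Rmult_le_compat_l; [apply pos_INR | exact Htaylor]|].
    rewrite HS. apply (Rmult_le_reg_r (INR N ^ 2)); [nra|].
    replace ((INR N + 1) * (2 * c * (1 / INR N) ^ 2) * INR N ^ 2) with (2 * c * (INR N + 1))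
      by (field; lra).
    replace (4 * c / INR N * INR N ^ 2) with (4 * c * INR N) by (field; lra). nra. }
  assert (H2 : Cmod z * Rabs (INR (S N) * L - 1) <= Cmod z / INR N).
  { unfold Rdiv. rewrite <- (Rmult_1_l (/ INR N)).
    apply Rmult_le_compat_l; [apply Cmod_ge_0 | exact Hlin]. }
  unfold gauss_increment_const. fold c.
  replace ((4 * c + Cmod z) / INR N) with (4 * c / INR N + Cmod z / INR N) by (field; lra).
  lra.
Qed.

Lemma Cprod_shift_neq0 z N : 0 < Re z -> Cprod_shift z N <> 0%C.
Proof.
  intros Hz. assert (Hnz : forall w : C, 0 < Re w -> w <> 0%C).
  { intros w Hw E. rewrite E in Hw. simpl in Hw. lra. }
  induction N as [|N IH].
  - exact (Hnz z Hz).
  - apply Cmult_neq_0; [exact IH|]. apply Hnz.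
    change (0 < Re z + INR (S N)). pose proof (pos_INR (S N)). lra.
Qed.

Lemma gauss_seq_succ z N : 0 < Re z ->
  (gauss_seq z (S N) * (z + RtoC (INR (S N))))%C =
  (gauss_seq z N * (RtoC (INR (S N)) * cexp_ray z (ln (INR (S N)) - ln (INR N))))%C.
Proof.
  intros Hz. unfold gauss_seq.
  change (Cprod_shift z (S N)) with (Cprod_shift z N * (z + RtoC (INR (S N))))%C.
  rewrite !Cnatpow_cexp_ray.
  replace (ln (INR (S N))) with (ln (INR N) + (ln (INR (S N)) - ln (INR N))) at 1 by ring.
  rewrite cexp_ray_add.
  change (fact (S N)) with (S N * fact N)%nat. rewrite mult_INR, RtoC_mult.
  assert (Hshift : (z + RtoC (INR (S N)))%C <> 0%C).
  { intros E. apply (f_equal Re) in E. change (Re z + INR (S N) = 0) in E.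
    pose proof (pos_INR (S N)). lra. }
  field. split; [apply Cprod_shift_neq0, Hz | exact Hshift].
Qed.

Lemma gauss_seq_increment_le z N : 0 < Re z -> (1 <= N)%nat ->
  Cmod (gauss_seq z (S N) - gauss_seq z N)%C <=
  Cmod (gauss_seq z N) * (gauss_increment_const z * (1 / INR N - 1 / (INR N + 1))).
Proof.
  intros Hz HN.
  set (L := ln (INR (S N)) - ln (INR N)).
  set (D := (z + RtoC (INR (S N)))%C).
  assert (Hn : 1 <= INR N) by (apply (le_INR 1); exact HN).
  assert (Hid : ((gauss_seq z (S N) - gauss_seq z N) * D)%C =
    (gauss_seq z N * (RtoC (INR (S N)) * (cexp_ray z L - 1 - z * RtoC L)
                      + z * (RtoC (INR (S N) * L) - 1)))%C).
  { transitivity (gauss_seq z (S N) * D - gauss_seq z N * D)%C; [ring|].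
    unfold D. rewrite gauss_seq_succ by exact Hz. rewrite RtoC_mult. fold L. ring. }
  apply (f_equal Cmod) in Hid. rewrite !Cmod_mult in Hid.
  assert (HD : INR N + 1 <= Cmod D).
  { eapply Rle_trans; [|apply re_le_Cmod]. change (Re D) with (Re z + INR (S N)).
    rewrite S_INR, Rabs_pos_eq; lra. }
  pose proof (gauss_increment_factor_le z N HN) as Hfac. cbv zeta in Hfac. fold L in Hfac.
  set (K := gauss_increment_const z) in *.
  assert (HK : 0 <= K * (1 / INR N / (INR N + 1))).
  { apply Rmult_le_pos; [apply gauss_increment_const_ge0|].
    apply Rdiv_le_0_compat; [apply Rdiv_le_0_compat|]; lra. }
  replace (1 / INR N - 1 / (INR N + 1)) with (1 / INR N / (INR N + 1)) by (field; lra).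
  apply (Rmult_le_reg_r (Cmod D)); [lra|].
  rewrite Hid, Rmult_assoc.
  apply Rmult_le_compat_l; [apply Cmod_ge_0|].
  eapply Rle_trans; [exact Hfac|].
  replace (K / INR N) with (K * (1 / INR N / (INR N + 1)) * (INR N + 1)) by (field; lra).
  apply Rmult_le_compat_l; assumption.
Qed.

Lemma gauss_seq_Cmod_le z N : 0 < Re z -> (1 <= N)%nat ->
  Cmod (gauss_seq z N) <=
  Cmod (gauss_seq z 1) * exp (gauss_increment_const z * (1 - 1 / INR N)).
Proof.
  intros Hz HN. induction N as [|N IH]; [lia|].
  destruct (Nat.eq_dec N 0) as [-> | HN0].
  - simpl INR. replace (1 - 1 / 1) with 0 by field. rewrite Rmult_0_r, exp_0. lra.
  - assert (HN1 : (1 <= N)%nat) by lia.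
    assert (Hn : 1 <= INR N) by (apply (le_INR 1); exact HN1).
    set (K := gauss_increment_const z).
    set (d := 1 / INR N - 1 / (INR N + 1)).
    assert (Hd : 0 <= d).
    { unfold d. cut (1 / (INR N + 1) <= 1 / INR N); [lra|].
      apply Rmult_le_compat_l; [lra | apply Rinv_le_contravar; lra]. }
    assert (Hstep : Cmod (gauss_seq z (S N)) <= Cmod (gauss_seq z N) * exp (K * d)).
    { pose proof (gauss_seq_increment_le z N Hz HN1) as Hinc. fold K d in Hinc.
      pose proof (Cmod_triangle (gauss_seq z N) (gauss_seq z (S N) - gauss_seq z N)) as Htri.
      replace (gauss_seq z N + (gauss_seq z (S N) - gauss_seq z N))%C
        with (gauss_seq z (S N)) in Htri by ring.
      pose proof (Rmult_le_compat_l _ _ _ (Cmod_ge_0 (gauss_seq z N)) (exp_ineq1_le (K * d))).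
      lra. }
    eapply Rle_trans; [exact Hstep|].
    replace (K * (1 - 1 / INR (S N))) with (K * (1 - 1 / INR N) + K * d)
      by (unfold d; rewrite S_INR; ring).
    rewrite exp_plus, <- Rmult_assoc.
    apply Rmult_le_compat_r; [left; apply exp_pos | apply IH, HN1].
Qed.

Lemma is_lim_seq_div_INR_S c : is_lim_seq (fun N => c / INR (S N)) 0.
Proof.
  assert (Hinv : is_lim_seq (fun N => / INR (S N)) 0).
  { apply (is_lim_seq_incr_1 (fun N => / INR N)).
    replace (Finite 0) with (Rbar_inv p_infty) by reflexivity.
    apply is_lim_seq_inv; [apply is_lim_seq_INR | discriminate]. }
  apply (is_lim_seq_scal_l _ c) in Hinv. simpl in Hinv. rewrite Rmult_0_r in Hinv.
  exact Hinv.
Qed.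

Lemma gauss_seq_ex_lim z : 0 < Re z ->
  ex_finite_lim_seq (fun N => Re (gauss_seq z N)) /\
  ex_finite_lim_seq (fun N => Im (gauss_seq z N)).
Proof.
  intros Hz.
  set (K := gauss_increment_const z).
  set (M := Cmod (gauss_seq z 1) * exp K).
  assert (HK : 0 <= K) by apply gauss_increment_const_ge0.
  assert (Hbound : forall N, Cmod (gauss_seq z (S N)) <= M).
  { intros N. eapply Rle_trans; [apply gauss_seq_Cmod_le; [exact Hz | lia]|].
    apply Rmult_le_compat_l; [apply Cmod_ge_0|]. apply exp_le_exp. fold K.
    rewrite S_INR. pose proof (pos_INR N).
    assert (0 <= 1 / (INR N + 1)) by (apply Rdiv_le_0_compat; lra). nra. }
  assert (Hinc : forall N, Cmod (gauss_seq z (S (S N)) - gauss_seq z (S N))%C <=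
                   M * K / INR (S N) - M * K / INR (S (S N))).
  { intros N. pose proof (pos_INR N) as HN.
    eapply Rle_trans; [apply gauss_seq_increment_le; [exact Hz | lia]|]. fold K.
    replace (M * K / INR (S N) - M * K / INR (S (S N)))
      with (M * (K * (1 / INR (S N) - 1 / (INR (S N) + 1))))
      by (rewrite (S_INR (S N)), S_INR; field; lra).
    apply Rmult_le_compat_r; [|apply Hbound].
    apply Rmult_le_pos; [exact HK|]. rewrite S_INR.
    cut (1 / (INR N + 1 + 1) <= 1 / (INR N + 1)); [lra|].
    apply Rmult_le_compat_l; [lra | apply Rinv_le_contravar; lra]. }
  assert (Hproj : forall f : C -> R, (forall a b, Rabs (f a - f b) <= Cmod (a - b)%C) ->
            ex_finite_lim_seq (fun N => f (gauss_seq z N))).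
  { intros f Hf.
    destruct (ex_finite_lim_seq_dominated_increments (fun N => f (gauss_seq z (S N)))
                (fun N => M * K / INR (S N)) 0) as [l Hl].
    - apply is_lim_seq_div_INR_S.
    - intros N. eapply Rle_trans; [apply Hf | apply Hinc].
    - exists l. apply is_lim_seq_incr_1, Hl. }
  split; apply Hproj; intros a b.
  - replace (Re a - Re b) with (Re (a - b)%C) by (destruct a, b; simpl; ring).
    apply re_le_Cmod.
  - replace (Im a - Im b) with (Im (a - b)%C) by (destruct a, b; simpl; ring).
    eapply Rle_trans; [apply Rmax_r | apply Rmax_Cmod].
Qed.

Lemma CGamma_is_lim z : 0 < Re z ->
  is_lim_seq (fun N => Re (gauss_seq z N)) (Re (CGamma z)) /\
  is_lim_seq (fun N => Im (gauss_seq z N)) (Im (CGamma z)).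
Proof.
  intros Hz. destruct (gauss_seq_ex_lim z Hz) as [[a Ha] [b Hb]].
  unfold CGamma. cbn [Re Im fst snd].
  rewrite (is_lim_seq_unique _ _ Ha), (is_lim_seq_unique _ _ Hb). split; assumption.
Qed.

(** * Squared moduli of Gamma *)

Lemma prod_f_R0_pos f N : (forall j, 0 < f j) -> 0 < prod_f_R0 f N.
Proof. intros Hf. induction N as [|N IH]; simpl; [|apply Rmult_lt_0_compat]; auto. Qed.

Lemma prod_f_R0_mult f g h N : (forall j, h j = f j * g j) ->
  prod_f_R0 h N = prod_f_R0 f N * prod_f_R0 g N.
Proof. intros Hh. induction N as [|N IH]; simpl; rewrite ?IH, Hh; ring. Qed.

Definition shifted_prod (x : R) (N : nat) : R := prod_f_R0 (fun j => x + INR j) N.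

Definition shifted_sq_prod (X T : R) (N : nat) : R := prod_f_R0 (fun j => (X + INR j) ^ 2 + T) N.

Definition gauss_seq_R (x : R) (N : nat) : R :=
  INR (fact N) * exp (x * ln (INR N)) / shifted_prod x N.

(* [gauss_sq X T] is the Gauss product of Gamma(X + i sqrt T) Gamma(X - i sqrt T); it is
   real for every real T, including T < 0. *)
Definition gauss_sq (X T : R) (N : nat) : R :=
  INR (fact N) ^ 2 * exp (2 * X * ln (INR N)) / shifted_sq_prod X T N.

Definition Gamma_sq (X T : R) : R := real (Lim_seq (gauss_sq X T)).

Lemma shifted_prod_pos x N : 0 < x -> 0 < shifted_prod x N.
Proof. intros Hx. apply prod_f_R0_pos. intros j. pose proof (pos_INR j). lra. Qed.

Lemma shifted_sq_prod_pos X T N : 0 < X -> 0 < X ^ 2 + T ->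
  0 < shifted_sq_prod X T N.
Proof.
  intros HX HT. apply prod_f_R0_pos. intros j.
  pose proof (pos_INR j). assert (X ^ 2 <= (X + INR j) ^ 2) by (apply pow_incr; lra). lra.
Qed.

Lemma Cprod_shift_real x N :
  Cprod_shift (RtoC x) N = RtoC (shifted_prod x N).
Proof.
  induction N as [|N IH]; [unfold RtoC, shifted_prod; simpl; f_equal; ring|].
  change (Cprod_shift (RtoC x) (S N)) with (Cprod_shift (RtoC x) N * (RtoC x + RtoC (INR (S N))))%C.
  rewrite IH, <- RtoC_plus, <- RtoC_mult. reflexivity.
Qed.

Lemma gauss_seq_real x N : 0 < x -> gauss_seq (RtoC x) N = RtoC (gauss_seq_R x N).
Proof.
  intros Hx. unfold gauss_seq, gauss_seq_R.
  rewrite Cprod_shift_real, Cnatpow_cexp_ray, cexp_ray_real, <- RtoC_mult, <- RtoC_div.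
  - reflexivity.
  - apply Rgt_not_eq, shifted_prod_pos, Hx.
Qed.

Lemma Cmod_Cprod_shift_sq X t N :
  Cmod (Cprod_shift (X, t) N) ^ 2 = shifted_sq_prod X (t ^ 2) N.
Proof.
  induction N as [|N IH].
  - rewrite Cmod2_alt. unfold shifted_sq_prod. simpl. ring.
  - change (Cprod_shift (X, t) (S N)) with (Cprod_shift (X, t) N * ((X, t) + RtoC (INR (S N))))%C.
    rewrite Cmod_mult, Rpow_mult_distr, IH, Cmod2_alt. unfold shifted_sq_prod. simpl prod_f_R0.
    f_equal.
    unfold RtoC, Cplus, Re, Im. simpl. ring.
Qed.

Lemma Cmod_gauss_seq_sq X t N : 0 < X ->
  Cmod (gauss_seq (X, t) N) ^ 2 = gauss_sq X (t ^ 2) N.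
Proof.
  intros HX. unfold gauss_seq, gauss_sq.
  assert (HP := Cprod_shift_neq0 (X, t) N HX).
  assert (HP' : Cmod (Cprod_shift (X, t) N) <> 0) by (intros E; apply HP, Cmod_eq_0, E).
  rewrite Cmod_div by exact HP.
  rewrite Cmod_mult, Cmod_R, Cnatpow_cexp_ray, Cmod_cexp_ray, Rabs_pos_eq by apply pos_INR.
  rewrite <- Cmod_Cprod_shift_sq. simpl Re.
  replace (2 * X * ln (INR N)) with (X * ln (INR N) + X * ln (INR N)) by ring.
  rewrite exp_plus. field. exact HP'.
Qed.

Lemma gauss_sq_neg X s N : 0 < X - s -> 0 <= s ->
  gauss_sq X (- s ^ 2) N = gauss_seq_R (X - s) N * gauss_seq_R (X + s) N.
Proof.
  intros Hs1 Hs2.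
  pose proof (shifted_prod_pos (X - s) N Hs1). pose proof (shifted_prod_pos (X + s) N ltac:(lra)).
  unfold gauss_sq, gauss_seq_R, shifted_sq_prod, shifted_prod in *.
  rewrite (prod_f_R0_mult (fun j => X - s + INR j) (fun j => X + s + INR j))
    by (intros j; ring).
  replace (2 * X * ln (INR N)) with ((X - s) * ln (INR N) + (X + s) * ln (INR N)) by ring.
  rewrite exp_plus. field. lra.
Qed.

Lemma gauss_seq_R_pos x N : 0 < x -> 0 < gauss_seq_R x N.
Proof.
  intros Hx. unfold gauss_seq_R. apply Rdiv_lt_0_compat.
  - apply Rmult_lt_0_compat; [apply INR_fact_lt_0 | apply exp_pos].
  - apply shifted_prod_pos, Hx.
Qed.

Lemma gauss_seq_R_succ x N : 0 < x ->
  gauss_seq_R x (S N) =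
  gauss_seq_R x N * (INR (S N) * exp (x * (ln (INR (S N)) - ln (INR N)))) / (x + INR (S N)).
Proof.
  intros Hx. pose proof (gauss_seq_succ (RtoC x) N Hx) as H.
  rewrite !gauss_seq_real, cexp_ray_real, <- !RtoC_plus, <- !RtoC_mult in H by exact Hx.
  apply RtoC_inj in H. pose proof (pos_INR (S N)).
  apply (Rmult_eq_reg_r (x + INR (S N))); [|lra]. rewrite H. field. lra.
Qed.

Lemma gauss_seq_R_le_succ x N : 0 < x -> (1 <= N)%nat -> gauss_seq_R x N <= gauss_seq_R x (S N).
Proof.
  intros Hx HN. rewrite gauss_seq_R_succ by exact Hx.
  set (L := ln (INR (S N)) - ln (INR N)).
  assert (Hn : 1 <= INR N) by (apply (le_INR 1); exact HN).
  assert (HL : 1 / INR (S N) <= L) by (unfold L; rewrite S_INR; apply ln_succ_bounds, Hn).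
  rewrite S_INR in *.
  assert (Hfactor : x + (INR N + 1) <= (INR N + 1) * exp (x * L)).
  { pose proof (exp_ineq1_le (x * L)).
    assert (x * (1 / (INR N + 1)) <= x * L) by (apply Rmult_le_compat_l; lra).
    replace (x + (INR N + 1)) with ((INR N + 1) * (1 + x * (1 / (INR N + 1)))) by (field; lra).
    apply Rmult_le_compat_l; lra. }
  pose proof (gauss_seq_R_pos x N Hx).
  apply (Rmult_le_reg_r (x + (INR N + 1))); [lra|].
  unfold Rdiv. rewrite Rmult_assoc, Rinv_l, Rmult_1_r by lra.
  apply Rmult_le_compat_l; lra.
Qed.

Lemma gauss_seq_R_ge_1 x N : 0 < x -> (1 <= N)%nat -> gauss_seq_R x 1 <= gauss_seq_R x N.
Proof.
  intros Hx HN. induction N as [|N IH]; [lia|].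
  destruct (Nat.eq_dec N 0) as [-> | HN0]; [lra|].
  eapply Rle_trans; [apply IH; lia | apply gauss_seq_R_le_succ; [exact Hx | lia]].
Qed.

Lemma shifted_sq_prod_le X T N : 0 < X -> 0 < X ^ 2 + T ->
  shifted_sq_prod X T N <=
  shifted_prod X N ^ 2 * exp (Rabs T * (1 / X ^ 2 + 2 - 2 / (INR N + 1))).
Proof.
  intros HX HT.
  assert (Hfactor : forall a, 0 < a -> a + T <= a * exp (Rabs T / a)).
  { intros a Ha. pose proof (exp_ineq1_le (Rabs T / a)) as H.
    apply (Rmult_le_compat_l a) in H; [|lra].
    replace (a * (1 + Rabs T / a)) with (a + Rabs T) in H by (field; lra).
    pose proof (Rle_abs T). lra. }
  unfold shifted_sq_prod, shifted_prod. induction N as [|N IH].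
  - cbn [prod_f_R0 INR]. rewrite Rplus_0_r.
    replace (Rabs T * (1 / X ^ 2 + 2 - 2 / (0 + 1))) with (Rabs T / X ^ 2) by (field; nra).
    apply Hfactor. nra.
  - cbn [prod_f_R0]. rewrite S_INR in *.
    set (n := INR N) in *. pose proof (pos_INR N) as Hn. fold n in Hn.
    set (a := (X + (n + 1)) ^ 2).
    assert (Ha : (n + 1) ^ 2 <= a) by (apply pow_incr; lra).
    (* 1/(j+1)^2 <= 2/(j+1) - 2/(j+2) telescopes to sum_{j>=1} 1/(X+j)^2 <= 2. *)
    assert (Hinv : Rabs T / a <= Rabs T * (2 / (n + 1) - 2 / (n + 1 + 1))).
    { replace (2 / (n + 1) - 2 / (n + 1 + 1)) with (2 / ((n + 1) * (n + 2))) by (field; lra).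
      unfold Rdiv. apply Rmult_le_compat_l; [apply Rabs_pos|].
      apply Rle_trans with (/ (n + 1) ^ 2); [apply Rinv_le_contravar; nra|].
      apply (Rmult_le_reg_r ((n + 1) ^ 2 * (n + 2))); [nra|].
      field_simplify; lra. }
    assert (HXa : X ^ 2 <= a) by (apply pow_incr; lra).
    pose proof (shifted_sq_prod_pos X T N HX HT) as Hpos. unfold shifted_sq_prod in Hpos.
    eapply Rle_trans.
    { apply Rmult_le_compat; [lra | lra | apply IH |].
      eapply Rle_trans; [apply Hfactor; nra|].
      apply Rmult_le_compat_l; [nra | apply exp_le_exp, Hinv]. }
    replace (Rabs T * (1 / X ^ 2 + 2 - 2 / (n + 1 + 1))) with
      (Rabs T * (1 / X ^ 2 + 2 - 2 / (n + 1)) + Rabs T * (2 / (n + 1) - 2 / (n + 1 + 1)))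
      by ring.
    rewrite exp_plus. unfold a. right. ring.
Qed.

Lemma gauss_sq_ge X T N : 0 < X -> 0 < X ^ 2 + T -> (1 <= N)%nat ->
  gauss_seq_R X 1 ^ 2 * exp (- (Rabs T * (1 / X ^ 2 + 2))) <= gauss_sq X T N.
Proof.
  intros HX HT HN.
  set (P := shifted_prod X N).
  set (E := exp (Rabs T * (1 / X ^ 2 + 2 - 2 / (INR N + 1)))).
  assert (HP : 0 < P) by apply shifted_prod_pos, HX.
  assert (HE : 0 < E) by apply exp_pos.
  assert (Hsq : gauss_sq X T N = gauss_seq_R X N ^ 2 * (P ^ 2 / shifted_sq_prod X T N)).
  { unfold gauss_sq, gauss_seq_R. fold P.
    replace (2 * X * ln (INR N)) with (X * ln (INR N) + X * ln (INR N)) by ring.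
    rewrite exp_plus. pose proof (shifted_sq_prod_pos X T N HX HT). field. lra. }
  assert (Hratio : / E <= P ^ 2 / shifted_sq_prod X T N).
  { pose proof (shifted_sq_prod_pos X T N HX HT).
    pose proof (shifted_sq_prod_le X T N HX HT) as Hle. fold P E in Hle.
    apply (Rmult_le_reg_r (E * shifted_sq_prod X T N)).
    - apply Rmult_lt_0_compat; assumption.
    - field_simplify; nra. }
  assert (HexpE : exp (- (Rabs T * (1 / X ^ 2 + 2))) <= / E).
  { unfold E. rewrite <- exp_Ropp. apply exp_le_exp.
    pose proof (pos_INR N). pose proof (Rabs_pos T).
    assert (0 <= 2 / (INR N + 1)) by (apply Rdiv_le_0_compat; lra). nra. }
  pose proof (gauss_seq_R_ge_1 X N HX HN). pose proof (gauss_seq_R_pos X 1 HX).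
  rewrite Hsq. apply Rmult_le_compat.
  - apply pow2_ge_0.
  - left; apply exp_pos.
  - apply pow_incr; lra.
  - lra.
Qed.

Lemma Gamma_sq_eq X T l : is_lim_seq (gauss_sq X T) l -> Gamma_sq X T = l.
Proof. intros H. unfold Gamma_sq. rewrite (is_lim_seq_unique _ _ H). reflexivity. Qed.

Lemma gauss_sq_is_lim_Cmod X t : 0 < X ->
  is_lim_seq (gauss_sq X (t ^ 2)) (Cmod (CGamma (X, t)) ^ 2).
Proof.
  intros HX. destruct (CGamma_is_lim (X, t) HX) as [Hre Him].
  apply is_lim_seq_ext with (fun N => Re (gauss_seq (X, t) N) * Re (gauss_seq (X, t) N)
                                     + Im (gauss_seq (X, t) N) * Im (gauss_seq (X, t) N)).
  { intros N. rewrite <- Cmod_gauss_seq_sq, Cmod2_alt by exact HX. ring. }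
  rewrite Cmod2_alt, <- !Rsqr_pow2.
  apply is_lim_seq_plus'; apply is_lim_seq_mult'; assumption.
Qed.

Lemma CGamma_real x : 0 < x ->
  CGamma (RtoC x) = RtoC (Re (CGamma (RtoC x))) /\
  is_lim_seq (gauss_seq_R x) (Re (CGamma (RtoC x))).
Proof.
  intros Hx. destruct (CGamma_is_lim (RtoC x) Hx) as [Hre Him].
  assert (Hseq : forall N, gauss_seq (RtoC x) N = RtoC (gauss_seq_R x N))
    by (intros N; apply gauss_seq_real, Hx).
  split.
  - assert (Him0 : is_lim_seq (fun _ => 0) (Im (CGamma (RtoC x)))).
    { eapply is_lim_seq_ext; [|exact Him]. intros N. cbv beta. rewrite Hseq. reflexivity. }
    apply is_lim_seq_unique in Him0. rewrite Lim_seq_const in Him0. injection Him0 as Him0.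
    apply injective_projections; [reflexivity | exact (eq_sym Him0)].
  - eapply is_lim_seq_ext; [|exact Hre]. intros N. cbv beta. rewrite Hseq. reflexivity.
Qed.

Lemma gauss_sq_is_lim_real X s : 0 <= s -> s < X ->
  is_lim_seq (gauss_sq X (- s ^ 2)) (Re (CGamma (RtoC (X - s))) * Re (CGamma (RtoC (X + s)))).
Proof.
  intros Hs HsX.
  destruct (CGamma_real (X - s) ltac:(lra)) as [_ H1].
  destruct (CGamma_real (X + s) ltac:(lra)) as [_ H2].
  eapply is_lim_seq_ext; [|apply is_lim_seq_mult'; [exact H1 | exact H2]].
  intros N. symmetry. apply gauss_sq_neg; lra.
Qed.

Lemma Gamma_sq_is_lim X T : 0 < X -> 0 < X ^ 2 + T ->
  is_lim_seq (gauss_sq X T) (Gamma_sq X T) /\ 0 < Gamma_sq X T.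
Proof.
  intros HX HT.
  assert (Hex : exists l : R, is_lim_seq (gauss_sq X T) l).
  { destruct (Rle_or_lt 0 T) as [T0 | T0].
    - exists (Cmod (CGamma (X, sqrt T)) ^ 2).
      rewrite <- (pow2_sqrt T) at 1 by exact T0. apply gauss_sq_is_lim_Cmod, HX.
    - set (s := sqrt (- T)).
      assert (Hs : - s ^ 2 = T) by (unfold s; rewrite pow2_sqrt; lra).
      assert (s0 : 0 <= s) by apply sqrt_pos.
      exists (Re (CGamma (RtoC (X - s))) * Re (CGamma (RtoC (X + s)))).
      rewrite <- Hs. apply gauss_sq_is_lim_real; [exact s0 | nra]. }
  destruct Hex as [l Hl]. rewrite (Gamma_sq_eq X T l Hl). split; [exact Hl|].
  set (c := gauss_seq_R X 1 ^ 2 * exp (- (Rabs T * (1 / X ^ 2 + 2)))).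
  assert (Hc : 0 < c).
  { pose proof (gauss_seq_R_pos X 1 HX). apply Rmult_lt_0_compat; [nra | apply exp_pos]. }
  assert (Hle : Rbar_le c l).
  { apply (is_lim_seq_le_loc (fun _ => c) (gauss_sq X T)); [|apply is_lim_seq_const | exact Hl].
    exists 1%nat. intros N HN. apply gauss_sq_ge; assumption. }
  change (c <= l) in Hle. exact (Rlt_le_trans _ _ _ Hc Hle).
Qed.

Lemma Cprod_shift_conj z N : Cprod_shift (Cconj z) N = Cconj (Cprod_shift z N).
Proof.
  induction N as [|N IH]; [reflexivity|].
  change (Cprod_shift (Cconj z) (S N))
    with (Cprod_shift (Cconj z) N * (Cconj z + RtoC (INR (S N))))%C.
  change (Cprod_shift z (S N)) with (Cprod_shift z N * (z + RtoC (INR (S N))))%C.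
  rewrite Cmult_conj, Cplus_conj, IH. f_equal. f_equal.
  unfold Cconj, RtoC; simpl. f_equal; ring.
Qed.

Lemma gauss_seq_conj z N : 0 < Re z -> gauss_seq (Cconj z) N = Cconj (gauss_seq z N).
Proof.
  intros Hz. unfold gauss_seq.
  rewrite Cdiv_conj, Cmult_conj, Cprod_shift_conj, !Cnatpow_cexp_ray, cexp_ray_conj
    by apply Cprod_shift_neq0, Hz.
  f_equal. f_equal. unfold Cconj, RtoC; simpl. f_equal; ring.
Qed.

Lemma CGamma_conj z : 0 < Re z -> CGamma (Cconj z) = Cconj (CGamma z).
Proof.
  intros Hz. unfold CGamma.
  assert (Hre : forall N, Re (gauss_seq (Cconj z) N) = Re (gauss_seq z N))
    by (intros N; rewrite gauss_seq_conj by exact Hz; apply re_conj).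
  assert (Him : forall N, Im (gauss_seq (Cconj z) N) = - Im (gauss_seq z N))
    by (intros N; rewrite gauss_seq_conj by exact Hz; apply im_conj).
  rewrite (Lim_seq_ext _ _ Hre), (Lim_seq_ext _ _ Him), Lim_seq_opp, Rbar_opp_real.
  reflexivity.
Qed.

(** * Theta as a ratio of squared moduli *)

Lemma Cmult_ratio_conj c (u v : C) : v <> 0%C ->
  (RtoC c * ((u / v) * (Cconj u / Cconj v)))%C = RtoC (c * (Cmod u ^ 2 / Cmod v ^ 2)).
Proof.
  intros Hv.
  assert (Hmod : Cmod v <> 0) by (intros E; apply Hv, Cmod_eq_0, E).
  assert (Hconj : Cconj v <> 0%C) by (intros E; apply Hmod; rewrite <- Cmod_conj, E; apply Cmod_0).
  rewrite RtoC_mult, RtoC_div by (apply pow_nonzero, Hmod).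
  rewrite !Cmod2_conj. field. split; assumption.
Qed.

Lemma Re_scaled_Gamma_ratio_conj c X g t : 0 < X -> 0 < g ->
  Re (RtoC c * ((CGamma ((X + g)%R, t) / CGamma (X, t)) *
                (CGamma ((X + g)%R, (- t)%R) / CGamma (X, (- t)%R))))%C =
  c * (Gamma_sq (X + g) (t ^ 2) / Gamma_sq X (t ^ 2)).
Proof.
  intros HX Hg.
  change (X + g, - t) with (Cconj (X + g, t)). change (X, - t) with (Cconj (X, t)).
  rewrite !CGamma_conj by (simpl; lra).
  rewrite (Gamma_sq_eq _ _ _ (gauss_sq_is_lim_Cmod (X + g) t ltac:(lra))).
  rewrite (Gamma_sq_eq _ _ _ (gauss_sq_is_lim_Cmod X t HX)).
  rewrite Cmult_ratio_conj; [reflexivity|].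
  intros E. destruct (Gamma_sq_is_lim X (t ^ 2) HX ltac:(nra)) as [_ Hpos].
  rewrite (Gamma_sq_eq _ _ _ (gauss_sq_is_lim_Cmod X t HX)), E, Cmod_0 in Hpos.
  simpl in Hpos. lra.
Qed.

Lemma Re_scaled_Gamma_ratio_real c X g s : 0 <= s -> s < X -> 0 < g ->
  Re (RtoC c * ((CGamma (RtoC (X + g - s)%R) / CGamma (RtoC (X - s)%R)) *
                (CGamma (RtoC (X + g + s)%R) / CGamma (RtoC (X + s)%R))))%C =
  c * (Gamma_sq (X + g) (- s ^ 2) / Gamma_sq X (- s ^ 2)).
Proof.
  intros Hs HsX Hg.
  rewrite (Gamma_sq_eq _ _ _ (gauss_sq_is_lim_real (X + g) s Hs ltac:(lra))).
  rewrite (Gamma_sq_eq _ _ _ (gauss_sq_is_lim_real X s Hs HsX)).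
  destruct (Gamma_sq_is_lim X (- s ^ 2) ltac:(lra) ltac:(nra)) as [_ Hpos].
  rewrite (Gamma_sq_eq _ _ _ (gauss_sq_is_lim_real X s Hs HsX)) in Hpos.
  rewrite (proj1 (CGamma_real (X + g - s) ltac:(lra))), (proj1 (CGamma_real (X - s) ltac:(lra))),
    (proj1 (CGamma_real (X + g + s) ltac:(lra))), (proj1 (CGamma_real (X + s) ltac:(lra))).
  set (A := Re (CGamma (RtoC (X + g - s)))). set (B := Re (CGamma (RtoC (X - s)))).
  set (C' := Re (CGamma (RtoC (X + g + s)))). set (D := Re (CGamma (RtoC (X + s)))).
  fold B D in Hpos.
  assert (HB : B <> 0) by (intros E; rewrite E, Rmult_0_l in Hpos; exact (Rlt_irrefl 0 Hpos)).
  assert (HD : D <> 0) by (intros E; rewrite E, Rmult_0_r in Hpos; exact (Rlt_irrefl 0 Hpos)).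
  rewrite <- !RtoC_div, <- !RtoC_mult by assumption.
  simpl. field. split; assumption.
Qed.

Definition Theta_X (n k : nat) (g : R) (m : nat) : R := (1 - g) / 2 + a_ n k m / 2.

Definition Theta_T (k : nat) (lam : nat -> R) (l : nat) : R := (lam l - (INR k / 2) ^ 2) / 4.

Lemma b_cases k lam :
  (exists t, b_ k lam = RtoC (2 * t) /\ t ^ 2 = (lam - (INR k / 2) ^ 2) / 4) \/
  (exists s, 0 <= s /\ b_ k lam = (Ci * RtoC (2 * s))%C /\ - s ^ 2 = (lam - (INR k / 2) ^ 2) / 4).
Proof.
  unfold b_. destruct (Rle_dec ((INR k / 2) ^ 2) lam) as [Hlam | Hlam].
  - left. exists (sqrt (lam - (INR k / 2) ^ 2) / 2). split.
    + f_equal. field.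
    + replace ((sqrt (lam - (INR k / 2) ^ 2) / 2) ^ 2) with (sqrt (lam - (INR k / 2) ^ 2) ^ 2 / 4)
        by field.
      rewrite pow2_sqrt; lra.
  - right. exists (sqrt ((INR k / 2) ^ 2 - lam) / 2). split; [|split].
    + pose proof (sqrt_pos ((INR k / 2) ^ 2 - lam)). lra.
    + do 2 f_equal. field.
    + replace ((sqrt ((INR k / 2) ^ 2 - lam) / 2) ^ 2) with (sqrt ((INR k / 2) ^ 2 - lam) ^ 2 / 4)
        by field.
      rewrite pow2_sqrt; lra.
Qed.

Lemma half_shift_add u a (w : C) :
  (RtoC u + (RtoC a + w) / RtoC 2)%C = (u + a / 2 + Re w / 2, Im w / 2).
Proof. destruct w. unfold Cplus, Cdiv, Cmult, Cinv, RtoC; simpl. f_equal; field. Qed.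

Lemma half_shift_sub u a (w : C) :
  (RtoC u + (RtoC a - w) / RtoC 2)%C = (u + a / 2 - Re w / 2, - (Im w / 2)).
Proof. destruct w. unfold Cminus, Copp, Cplus, Cdiv, Cmult, Cinv, RtoC; simpl. f_equal; field. Qed.

Lemma Re_Theta_real_b n k g lam m l t : b_ k (lam l) = RtoC (2 * t) ->
  0 < g -> 0 < Theta_X n k g m ->
  Re (Theta n k g lam m l) =
  Rpower 4 g * (Gamma_sq (Theta_X n k g m + g) (t ^ 2) / Gamma_sq (Theta_X n k g m) (t ^ 2)).
Proof.
  intros Hb Hg HX. unfold Theta. rewrite Hb, !half_shift_add, !half_shift_sub.
  replace (Re (RtoC (2 * t) * Ci)) with 0 by (simpl; ring).
  replace (Im (RtoC (2 * t) * Ci) / 2) with t by (simpl; field).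
  unfold Theta_X in *.
  replace ((1 + g) / 2 + a_ n k m / 2 + 0 / 2) with ((1 - g) / 2 + a_ n k m / 2 + g) by field.
  replace ((1 + g) / 2 + a_ n k m / 2 - 0 / 2) with ((1 - g) / 2 + a_ n k m / 2 + g) by field.
  replace ((1 - g) / 2 + a_ n k m / 2 + 0 / 2) with ((1 - g) / 2 + a_ n k m / 2) by field.
  replace ((1 - g) / 2 + a_ n k m / 2 - 0 / 2) with ((1 - g) / 2 + a_ n k m / 2) by field.
  apply Re_scaled_Gamma_ratio_conj; assumption.
Qed.

Lemma Re_Theta_imag_b n k g lam m l s : b_ k (lam l) = (Ci * RtoC (2 * s))%C ->
  0 < g -> 0 <= s -> s < Theta_X n k g m ->
  Re (Theta n k g lam m l) =
  Rpower 4 g * (Gamma_sq (Theta_X n k g m + g) (- s ^ 2) / Gamma_sq (Theta_X n k g m) (- s ^ 2)).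
Proof.
  intros Hb Hg Hs HsX. unfold Theta. rewrite Hb, !half_shift_add, !half_shift_sub.
  replace (Re (Ci * RtoC (2 * s) * Ci) / 2) with (- s) by (simpl; field).
  replace (Im (Ci * RtoC (2 * s) * Ci) / 2) with 0 by (simpl; field).
  unfold Theta_X in *. set (X := (1 - g) / 2 + a_ n k m / 2) in *.
  replace ((1 + g) / 2 + a_ n k m / 2 + - s, 0) with (RtoC (X + g - s))
    by (unfold X, RtoC; f_equal; field).
  replace ((1 + g) / 2 + a_ n k m / 2 - - s, - 0) with (RtoC (X + g + s))
    by (unfold X, RtoC; f_equal; field).
  replace (X + - s, 0) with (RtoC (X - s)) by (unfold RtoC; f_equal; field).
  replace (X - - s, - 0) with (RtoC (X + s)) by (unfold RtoC; f_equal; field).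
  apply Re_scaled_Gamma_ratio_real; assumption.
Qed.

Lemma Re_Theta n k g lam m l : 0 < g -> 0 < Theta_X n k g m ->
  0 < Theta_X n k g m ^ 2 + Theta_T k lam l ->
  Re (Theta n k g lam m l) =
  Rpower 4 g * (Gamma_sq (Theta_X n k g m + g) (Theta_T k lam l) /
                Gamma_sq (Theta_X n k g m) (Theta_T k lam l)).
Proof.
  intros Hg HX HXT. unfold Theta_T in *.
  destruct (b_cases k (lam l)) as [[t [Hb Ht]] | [s [Hs [Hb Hs2]]]].
  - rewrite <- Ht. apply Re_Theta_real_b; assumption.
  - rewrite <- Hs2 in *. apply Re_Theta_imag_b; [assumption.. |]. nra.
Qed.

Lemma a_eq n k m : (k + 2 <= n)%nat -> a_ n k m = INR m + (INR n - INR k - 2) / 2.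
Proof.
  intros Hnk. apply le_INR in Hnk. rewrite plus_INR in Hnk. simpl in Hnk.
  unfold a_, mu_. pose proof (pos_INR m).
  replace (INR m * (INR m + INR n - INR k - 2) + ((INR n - INR k - 2) / 2) ^ 2)
    with ((INR m + (INR n - INR k - 2) / 2) ^ 2) by field.
  apply sqrt_pow2. lra.
Qed.

Lemma Theta_X_succ n k g m : (k + 2 <= n)%nat ->
  Theta_X n k g (S m) = Theta_X n k g m + / 2.
Proof. intros Hnk. unfold Theta_X. rewrite !a_eq, S_INR by exact Hnk. field. Qed.

Lemma Theta_X_gt n k g m : (k + 2 <= n)%nat -> INR k < INR n / 2 - g ->
  INR k / 4 < Theta_X n k g m.
Proof.
  intros Hnk Hkn. unfold Theta_X. rewrite a_eq by exact Hnk. pose proof (pos_INR m). lra.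
Qed.

Lemma Theta_X_sq_add_T_pos n k g lam m l : (k + 2 <= n)%nat -> INR k < INR n / 2 - g ->
  0 <= lam l -> 0 < Theta_X n k g m ^ 2 + Theta_T k lam l.
Proof.
  intros Hnk Hkn Hlam. pose proof (Theta_X_gt n k g m Hnk Hkn) as HX.
  pose proof (pos_INR k).
  assert ((INR k / 4) ^ 2 < Theta_X n k g m ^ 2)
    by (rewrite <- !Rsqr_pow2; apply Rsqr_incrst_1; lra).
  unfold Theta_T. lra.
Qed.

(** * Monotonicity *)

Lemma prod_f_R0_first_ratio_le f g N : (forall j, 0 < g j <= f j) ->
  f 0%nat / g 0%nat * prod_f_R0 g N <= prod_f_R0 f N.
Proof.
  intros Hfg. destruct (Hfg 0%nat) as [Hg0 Hf0].
  induction N as [|N IH]; simpl.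
  - right. field. lra.
  - destruct (Hfg (S N)) as [HgS HfS].
    assert (0 <= f 0%nat / g 0%nat * prod_f_R0 g N).
    { apply Rmult_le_pos; [apply Rdiv_le_0_compat; lra|].
      left. apply prod_f_R0_pos. intros j. apply Hfg. }
    rewrite <- Rmult_assoc. apply Rmult_le_compat; lra.
Qed.

Lemma gauss_sq_ratio X g T N : 0 < X -> 0 < g -> 0 < X ^ 2 + T ->
  gauss_sq (X + g) T N / gauss_sq X T N =
  exp (2 * g * ln (INR N)) * (shifted_sq_prod X T N / shifted_sq_prod (X + g) T N).
Proof.
  intros HX Hg HT. unfold gauss_sq.
  pose proof (shifted_sq_prod_pos X T N HX HT).
  pose proof (shifted_sq_prod_pos (X + g) T N ltac:(lra) ltac:(nra)).
  pose proof (INR_fact_lt_0 N). pose proof (exp_pos (2 * X * ln (INR N))).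
  replace (2 * (X + g) * ln (INR N)) with (2 * X * ln (INR N) + 2 * g * ln (INR N)) by ring.
  rewrite exp_plus. field. repeat split; lra.
Qed.

Lemma Gamma_sq_ratio_scaled_le rho X X' g T T' :
  0 < X -> 0 < X' -> 0 < g -> 0 < X ^ 2 + T -> 0 < X' ^ 2 + T' ->
  (forall N, rho * (shifted_sq_prod X T N * shifted_sq_prod (X' + g) T' N) <=
             shifted_sq_prod X' T' N * shifted_sq_prod (X + g) T N) ->
  rho * (Gamma_sq (X + g) T / Gamma_sq X T) <= Gamma_sq (X' + g) T' / Gamma_sq X' T'.
Proof.
  intros HX HX' Hg HT HT' Hprod.
  assert (Hlim : forall Y S, 0 < Y -> 0 < Y ^ 2 + S ->
    is_lim_seq (fun N => gauss_sq (Y + g) S N / gauss_sq Y S N)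
               (Gamma_sq (Y + g) S / Gamma_sq Y S)).
  { intros Y S HY HS. destruct (Gamma_sq_is_lim Y S HY HS) as [H1 P1].
    destruct (Gamma_sq_is_lim (Y + g) S ltac:(lra) ltac:(nra)) as [H2 _].
    apply is_lim_seq_div'; [exact H2 | exact H1 | lra]. }
  assert (Hscaled := is_lim_seq_scal_l _ rho _ (Hlim X T HX HT)). simpl in Hscaled.
  refine (is_lim_seq_le _ _ _ _ _ Hscaled (Hlim X' T' HX' HT')).
  intros N. cbv beta. rewrite !gauss_sq_ratio by assumption.
  pose proof (shifted_sq_prod_pos X T N HX HT) as Ha.
  pose proof (shifted_sq_prod_pos (X + g) T N ltac:(lra) ltac:(nra)) as Hb.
  pose proof (shifted_sq_prod_pos X' T' N HX' HT') as Hc.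
  pose proof (shifted_sq_prod_pos (X' + g) T' N ltac:(lra) ltac:(nra)) as Hd.
  set (e := exp (2 * g * ln (INR N))).
  assert (He : 0 < e / (shifted_sq_prod (X + g) T N * shifted_sq_prod (X' + g) T' N))
    by (apply Rdiv_lt_0_compat; [apply exp_pos | nra]).
  pose proof (Rmult_le_compat_l _ _ _ (Rlt_le _ _ He) (Hprod N)) as HN.
  eapply Rle_trans; [|eapply Rle_trans; [exact HN|]]; right; field; lra.
Qed.

Lemma Gamma_sq_ratio_le_mono X g T T' : 0 < X -> 0 < g -> 0 < X ^ 2 + T -> T <= T' ->
  Gamma_sq (X + g) T / Gamma_sq X T <= Gamma_sq (X + g) T' / Gamma_sq X T'.
Proof.
  intros HX Hg HT HTT'.
  rewrite <- (Rmult_1_l (Gamma_sq (X + g) T / Gamma_sq X T)).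
  apply Gamma_sq_ratio_scaled_le; try assumption; [lra|].
  intros N. rewrite Rmult_1_l. unfold shifted_sq_prod.
  rewrite <- !(prod_f_R0_mult _ _ _ N (fun j => eq_refl)).
  apply prod_SO_Rle. intros j _. pose proof (pos_INR j).
  assert (X ^ 2 <= (X + INR j) ^ 2) by (apply pow_incr; lra).
  assert ((X + INR j) ^ 2 <= (X + g + INR j) ^ 2) by (apply pow_incr; lra).
  split; [apply Rmult_le_pos; lra|].
  assert (Hcross : ((X + INR j) ^ 2 + T') * ((X + g + INR j) ^ 2 + T)
                   - ((X + INR j) ^ 2 + T) * ((X + g + INR j) ^ 2 + T')
                   = ((X + g + INR j) ^ 2 - (X + INR j) ^ 2) * (T' - T)) by ring.
  assert (0 <= ((X + g + INR j) ^ 2 - (X + INR j) ^ 2) * (T' - T))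
    by (apply Rmult_le_pos; lra).
  lra.
Qed.

Lemma Gamma_sq_ratio_lt_shift X h g T : 0 < X -> 0 < h -> 0 < g -> 0 < X ^ 2 + T -> T <= 0 ->
  Gamma_sq (X + g) T / Gamma_sq X T < Gamma_sq (X + h + g) T / Gamma_sq (X + h) T.
Proof.
  intros HX Hh Hg HT HT0.
  set (F := fun j => ((X + h + INR j) ^ 2 + T) * ((X + g + INR j) ^ 2 + T)).
  set (G := fun j => ((X + INR j) ^ 2 + T) * ((X + h + g + INR j) ^ 2 + T)).
  assert (HFG : forall j, 0 < G j < F j).
  { intros j. unfold F, G. pose proof (pos_INR j).
    set (u := X + INR j). set (v := X + h + INR j).
    replace (X + g + INR j) with (u + g) by (unfold u; ring).
    replace (X + h + g + INR j) with (v + g) by (unfold v; ring).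
    assert (Hu : X <= u) by (unfold u; lra). assert (Hv : u + h = v) by (unfold u, v; ring).
    assert (Hu2 : 0 < u ^ 2 + T) by (assert (X ^ 2 <= u ^ 2) by (apply pow_incr; lra); lra).
    assert (Hug : u ^ 2 <= (u + g) ^ 2) by (apply pow_incr; lra).
    assert (Hvg : u ^ 2 <= (v + g) ^ 2) by (apply pow_incr; lra).
    assert (Hcross : (v ^ 2 + T) * ((u + g) ^ 2 + T) - (u ^ 2 + T) * ((v + g) ^ 2 + T)
                     = g * (v - u) * (2 * (u * v - T) + g * (u + v))) by ring.
    assert (0 < g * (v - u) * (2 * (u * v - T) + g * (u + v))).
    { apply Rmult_lt_0_compat; [apply Rmult_lt_0_compat; lra | nra]. }
    split; [apply Rmult_lt_0_compat|]; lra. }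
  set (rho := F 0%nat / G 0%nat).
  assert (Hrho : 1 < rho).
  { destruct (HFG 0%nat). unfold rho. apply (Rmult_lt_reg_r (G 0%nat)); [lra|].
    field_simplify; lra. }
  assert (Hscaled : rho * (Gamma_sq (X + g) T / Gamma_sq X T) <=
                    Gamma_sq (X + h + g) T / Gamma_sq (X + h) T).
  { apply Gamma_sq_ratio_scaled_le; try assumption; [lra | nra |].
    intros N. unfold shifted_sq_prod.
    rewrite <- !(prod_f_R0_mult _ _ _ N (fun j => eq_refl)).
    apply prod_f_R0_first_ratio_le. intros j. destruct (HFG j). fold (F j) (G j). lra. }
  destruct (Gamma_sq_is_lim X T HX HT) as [_ P1].
  destruct (Gamma_sq_is_lim (X + g) T ltac:(lra) ltac:(nra)) as [_ P2].
  assert (0 < Gamma_sq (X + g) T / Gamma_sq X T) by (apply Rdiv_lt_0_compat; assumption).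
  nra.
Qed.

Theorem proposition3p8 (n k : nat) (gamma : R) (lambda : nat -> R) :
  0 < gamma -> gamma < INR n / 2 ->
  (1 <= k)%nat -> INR k < INR n / 2 - gamma ->
  lambda 0%nat = 0 -> 0 < lambda 1%nat ->
  (forall l : nat, lambda l <= lambda (S l)) ->
  forall m l : nat,
    Re (Theta n k gamma lambda (S m) 0) > Re (Theta n k gamma lambda m 0) /\
    Re (Theta n k gamma lambda m (S l)) >= Re (Theta n k gamma lambda m l).
Proof.
  (* [0 < lambda 1] is unused: only [lambda 0 = 0] and the monotonicity of [lambda] matter. *)
  intros Hg _ Hk Hkn Hlam0 _ Hmono m l.
  assert (Hnk : (k + 2 <= n)%nat).
  { assert (H2k : INR (2 * k) < INR n) by (rewrite mult_INR; simpl; lra).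
    apply INR_lt in H2k. lia. }
  assert (Hlam : forall i, 0 <= lambda i).
  { induction i as [|i IH]; [lra|]. specialize (Hmono i). lra. }
  assert (HX : forall j, 0 < Theta_X n k gamma j).
  { intros j. pose proof (Theta_X_gt n k gamma j Hnk Hkn). pose proof (pos_INR k). lra. }
  pose proof (fun j i => Theta_X_sq_add_T_pos n k gamma lambda j i Hnk Hkn (Hlam i)) as HXT.
  assert (H4 : 0 < Rpower 4 gamma) by apply exp_pos.
  rewrite !Re_Theta by (exact Hg || apply HX || apply HXT).
  split.
  - apply Rmult_lt_compat_l; [exact H4|]. rewrite Theta_X_succ by exact Hnk.
    apply Gamma_sq_ratio_lt_shift; [apply HX | lra | exact Hg | apply HXT |].
    unfold Theta_T. rewrite Hlam0. pose proof (pow2_ge_0 (INR k / 2)). lra.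
  - apply Rle_ge, Rmult_le_compat_l; [lra|].
    apply Gamma_sq_ratio_le_mono; [apply HX | exact Hg | apply HXT |].
    unfold Theta_T. specialize (Hmono l). lra.
Qed.
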